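(* Let $H$ be a $\Lambda$-module, $k_1,k_2\ge1$ coprime integers, $z_1,z_2\in S^1$, and $\chi_i\colon H\to H/(t^{k_i}-1)\to S^1$ characters ($i=1,2$). Then $\alpha_{(k_1,z_1,\chi_1)}\otimes\alpha_{(k_2,z_2,\chi_2)}$ is conjugate to $\alpha_{(k_1k_2,\,z_1z_2,\,\chi_1\chi_2)}$, where $\chi_1\chi_2(h)=\chi_1(h)\chi_2(h)$ (a character factoring through $H/(t^{k_1k_2}-1)$). If moreover $\alpha_{(k_1,z_1,\chi_1)}$ and $\alpha_{(k_2,z_2,\chi_2)}$ are irreducible, then their tensor product is irreducible.
   Context: $\Lambda=\mathbb{Z}[t,t^{-1}]$; $\mathbb{Z}\ltimes H$ has multiplication $(n,h)(m,h')=(n+m,t^mh+h')$. For $k\ge1$, $z\in S^1$ and a character $\chi\colon H\to S^1$ factoring through $H/(t^k-1)H$, $\alpha_{(k,z,\chi)}\colon\mathbb{Z}\ltimes H\to U(k)$ is $\alpha_{(k,z,\chi)}(n,h)=z^nA_k^n\,\mathrm{diag}(\chi(h),\chi(th),\dots,\chi(t^{k-1}h))$, where $A_k$ is the $k\times k$ cyclic permutation matrix with $A_ke_i=e_{i+1}$ (indices mod $k$). *)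

From HB Require Import structures.
From mathcomp Require Import all_boot all_order all_algebra.
From mathcomp Require Import reals.
From mathcomp Require Import complex mxtens.
Set Implicit Arguments. Unset Strict Implicit. Unset Printing Implicit Defensive.
Import Order.TTheory GRing.Theory Num.Theory.
Local Open Scope ring_scope.

Section Defs.
Variable C : numClosedFieldType.

Definition in_S1 (z : C) : Prop := `|z| = 1.

Definition is_character (H : zmodType) (chi : H -> C) : Prop :=
  (forall h, in_S1 (chi h)) /\ (forall h h', chi (h + h') = chi h * chi h').

(* chi factors through H / (t^k - 1) H, i.e. chi vanishes (is 1) on (t^k - 1)H *)
Definition factors_through (H : zmodType) (t : H -> H) (k : nat) (chi : H -> C) :=
  forall h, chi (iter k t h - h) = 1.

(* A_k : cyclic permutation matrix, A_k e_j = e_{j+1 mod k}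
   (column j has its unique 1 in row j+1 mod k) *)
Definition cycmx (k : nat) : 'M[C]_k :=
  \matrix_(i < k, j < k) ((i : nat) == (j.+1 %% k)%N)%:R.

(* integer powers of A_k; A_k^{-1} = A_k^T since A_k is a permutation matrix *)
Definition cycpow (k : nat) (n : int) : 'M[C]_k :=
  match n with
  | Posz m => cycmx k ^+ m
  | Negz m => (cycmx k)^T ^+ m.+1
  end.

Definition alpha (H : zmodType) (t : H -> H) (k : nat) (z : C) (chi : H -> C)
  (g : int * H) : 'M[C]_k :=
  (z ^ g.1) *: (cycpow k g.1 *m diag_mx (\row_(i < k) chi (iter i t g.2))).

Definition tens_rep (G : Type) (m n : nat) (rho : G -> 'M[C]_m) (sigma : G -> 'M[C]_n)
  (g : G) : 'M[C]_(m * n) := rho g *t sigma g.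

Definition adjmx (n : nat) (U : 'M[C]_n) : 'M[C]_n := (map_mx Num.conj U)^T.

Definition unitary_mx (n : nat) (U : 'M[C]_n) : Prop := U *m adjmx U = 1%:M.

Definition conjugate_reps (G : Type) (n : nat) (rho sigma : G -> 'M[C]_n) : Prop :=
  exists U : 'M[C]_n, unitary_mx U /\ forall g, U *m rho g *m adjmx U = sigma g.

(* A subspace of column vectors is encoded by a
   matrix W whose rows span its transpose; invariance of the column space under
   rho g is invariance of the row space of W under right multiplication by (rho g)^T. *)
Definition irreducible_rep (G : Type) (n : nat) (rho : G -> 'M[C]_n) : Prop :=
  (0 < n)%N /\
  forall W : 'M[C]_n, (forall g, stablemx W (rho g)^T) -> (W == (0 : 'M[C]_n))%MS \/ row_full W.

End Defs.

(* The Chinese remainder bijection Z/N = Z/k1 x Z/k2, as a permutation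
   matrix, conjugates A_k1 (x) A_k2 to A_N and diag (x) diag to the diagonal of the product
   character; this gives the conjugacy.

   For irreducibility, alpha_(k,z,chi) is irreducible exactly when every period of
   n |-> chi o t^n is a multiple of k.  If a proper divisor g of k were a period, the matrix
   [i = j mod g] would commute with alpha, giving a proper invariant subspace.  Conversely,
   distinct translates chi o t^p, chi o t^q separate coordinates, so a nonzero invariant
   subspace contains a basis vector, hence all of them by the cyclic shift A_k.
   Finally, if d is a period of chi1 chi2, then c = (chi1 o t^d) / chi1 = chi2 / (chi2 o t^d)
   is both k1- and k2-periodic, hence t-invariant; then c^k1 = c^k2 = 1 forces c = 1, so d
   is a period of chi1 and of chi2, and k1 k2 divides d. *)

From HB Require Import structures.
From mathcomp Require Import all_boot all_order all_algebra.
From mathcomp Require Import reals.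
From mathcomp Require Import complex mxtens.
From Stdlib Require Import Classical.
Import Order.TTheory GRing.Theory Num.Theory.
Local Open Scope ring_scope.
Set Implicit Arguments. Unset Strict Implicit. Unset Printing Implicit Defensive.

Lemma expr_coprime_eq1 (R : pzRingType) (x : R) m n :
  coprime m n -> x ^+ m = 1 -> x ^+ n = 1 -> x = 1.
Proof.
case: m => [|m] cmn xm xn; first by move: cmn xn; rewrite /coprime gcd0n => /eqP ->.
have [km kn e _] := egcdnP n (ltn0Sn m).
have : x ^+ (km * m.+1) = x ^+ (kn * n + 1) by rewrite e (eqP cmn).
by rewrite exprD expr1 mulnC [(kn * n)%N]mulnC !exprM xm xn !expr1n mul1r.
Qed.

Section Periods.
Variables (C : numClosedFieldType) (H : zmodType) (t : {additive H -> H}).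

Definition periodic (f : H -> C) (d : nat) : Prop := forall h, f (iter d t h) = f h.

Definition exact_period (f : H -> C) (k : nat) : Prop :=
  periodic f k /\ forall d, periodic f d -> (k %| d)%N.

Lemma character_neq0 (chi : H -> C) h : is_character chi -> chi h != 0.
Proof. by case=> chi1 _; rewrite -normr_eq0 chi1 oner_eq0. Qed.

Lemma character0 (chi : H -> C) : is_character chi -> chi 0 = 1.
Proof.
move=> chiC; apply: (mulfI (character_neq0 0 chiC)).
by case: chiC => _ chiD; rewrite mulr1 -chiD addr0.
Qed.

Lemma character_mul (chi1 chi2 : H -> C) :
  is_character chi1 -> is_character chi2 -> is_character (fun h => chi1 h * chi2 h).
Proof.
move=> [S1 D1] [S2 D2]; split=> [h|h h']; first by rewrite /in_S1 normrM S1 S2 mulr1.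
by rewrite D1 D2 mulrACA.
Qed.

Lemma periodic_factors_through (chi : H -> C) k :
  is_character chi -> factors_through t k chi -> periodic chi k.
Proof. by move=> [_ chiD] chik h; rewrite -[iter k t h](subrK h) chiD chik mul1r. Qed.

Lemma periodicM (f : H -> C) d m : periodic f d -> periodic f (m * d).
Proof. by move=> fd; elim: m => // m IH h; rewrite mulSn iterD fd. Qed.

Lemma periodic_modn (f : H -> C) d j h :
  periodic f d -> f (iter j t h) = f (iter (j %% d) t h).
Proof. by move=> fd; rewrite {1}(divn_eq j d) iterD periodicM. Qed.

Lemma periodic_gcdn (f : H -> C) d1 d2 : (0 < d1)%N ->
  periodic f d1 -> periodic f d2 -> periodic f (gcdn d1 d2).
Proof.
move=> d1_gt0 fd1 fd2 h; have [km kn e _] := egcdnP d2 d1_gt0.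
by rewrite -(periodicM kn fd2) -iterD -e periodicM.
Qed.

Lemma iter_raddf0 n : iter n t 0 = 0.
Proof. by elim: n => //= n ->; rewrite raddf0. Qed.

Lemma iterC m n h : iter m t (iter n t h) = iter n t (iter m t h).
Proof. by rewrite -!iterD addnC. Qed.

Lemma iter_shift_factor (f c : H -> C) d : periodic c 1 ->
  (forall h, f (iter d t h) = c h * f h) ->
  forall m h, f (iter (m * d) t h) = c h ^+ m * f h.
Proof.
move=> c1 fd m h; elim: m => [|m IH]; first by rewrite expr0 mul1r.
have cj j : c (iter j t h) = c h by rewrite -[j]muln1 periodicM.
by rewrite mulSn iterD fd cj IH exprS mulrA.
Qed.

Lemma shift_factor_root (chi c : H -> C) k d : is_character chi -> periodic chi k ->
  periodic c 1 -> (forall h, chi (iter d t h) = c h * chi h) -> forall h, c h ^+ k = 1.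
Proof.
move=> chiC chik c1 chid h; apply: (mulIf (character_neq0 h chiC)).
by rewrite -(iter_shift_factor c1 chid) mul1r mulnC periodicM.
Qed.

Lemma exact_period_mul (chi1 chi2 : H -> C) k1 k2 :
  (0 < k1)%N -> coprime k1 k2 -> is_character chi1 -> is_character chi2 ->
  exact_period chi1 k1 -> exact_period chi2 k2 ->
  exact_period (fun h => chi1 h * chi2 h) (k1 * k2).
Proof.
move=> k1_gt0 ck chi1C chi2C [chi1k1 min1] [chi2k2 min2]; split.
  by move=> h; rewrite mulnC periodicM // -mulnC periodicM.
move=> d chid; pose c h := chi1 (iter d t h) / chi1 h.
have nz1 h := character_neq0 h chi1C; have nz2 h := character_neq0 h chi2C.
have c1d h : chi1 (iter d t h) = c h * chi1 h by rewrite divfK.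
have c2d h : chi2 (iter d t h) = (c h)^-1 * chi2 h.
  have cnz : c h != 0 by rewrite mulf_neq0 ?invr_eq0.
  apply: (mulfI cnz); rewrite mulVKf //; apply: (mulfI (nz1 h)).
  by have := chid h; rewrite /= c1d => <-; rewrite mulrCA mulrA.
have ck1 : periodic c k1 by move=> h; rewrite /c iterC !chi1k1.
have ck2 : periodic c k2.
  have c2E h : c h = chi2 h / chi2 (iter d t h).
    by rewrite c2d invfM invrK mulrCA divff ?mulr1.
  by move=> h; rewrite !c2E iterC !chi2k2.
have c1 : periodic c 1 by rewrite -(eqP ck); apply: periodic_gcdn.
have c_eq1 h : c h = 1.
  apply: (expr_coprime_eq1 ck); first exact: shift_factor_root c1d h.
  have c1V : periodic (fun h => (c h)^-1) 1 by move=> x /=; rewrite c1.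
  by rewrite -[c h]invrK exprVn (shift_factor_root chi2C chi2k2 c1V c2d) invr1.
have chi1d : periodic chi1 d by move=> h; rewrite c1d c_eq1 mul1r.
have chi2d : periodic chi2 d by move=> h; rewrite c2d c_eq1 invr1 mul1r.
by rewrite Gauss_dvd // min1 // min2.
Qed.

End Periods.

Lemma val_iter_ordS k (j : 'I_k) m : val (iter m (@ordS k) j) = ((j + m) %% k)%N.
Proof.
elim: m => [|m IH] /=; first by rewrite addn0 modn_small.
by rewrite IH addnS -addn1 modnDml addn1.
Qed.

Section CyclicMatrix.
Variable C : numClosedFieldType.

Lemma cycmxE k (i j : 'I_k) : cycmx C k i j = (i == ordS j)%:R.
Proof. by rewrite mxE -val_eqE. Qed.

Lemma mulmx_cycmx k m (X : 'M[C]_(m, k)) i j : (X *m cycmx C k) i j = X i (ordS j).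
Proof.
rewrite mxE (bigD1 (ordS j)) //= cycmxE eqxx mulr1 big1 ?addr0 // => l /negbTE l0.
by rewrite cycmxE l0 mulr0.
Qed.

Lemma cycmx_mulmx k m (X : 'M[C]_(k, m)) i j : (cycmx C k *m X) i j = X (ord_pred i) j.
Proof.
rewrite mxE (bigD1 (ord_pred i)) //= cycmxE ord_predK eqxx mul1r big1 ?addr0 // => l l0.
by rewrite cycmxE -(inj_eq (@ord_pred_inj k)) ordSK eq_sym (negbTE l0) mul0r.
Qed.

Lemma mulmx_trcycmx k m (X : 'M[C]_(m, k)) i j :
  (X *m (cycmx C k)^T) i j = X i (ord_pred j).
Proof. by rewrite -[X *m _]trmxK trmx_mul trmxK mxE cycmx_mulmx mxE. Qed.

Lemma delta_mx_mul_trcycmx k (p : 'I_k) :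
  delta_mx (0 : 'I_1) p *m (cycmx C k)^T = delta_mx 0 (ordS p).
Proof.
apply/matrixP=> a b; rewrite mulmx_trcycmx !mxE; congr (_ && _)%:R.
by apply/eqP/eqP=> [<-|->]; rewrite ?ord_predK ?ordSK.
Qed.

Variables (H : zmodType) (t : {additive H -> H}).

Lemma alpha_diagE k z (chi : H -> C) h :
  alpha t k z chi (0%:Z, h) = diag_mx (\row_(i < k) chi (iter i t h)).
Proof. by rewrite /alpha /= expr0z scale1r expr0 mul1mx. Qed.

Lemma alpha_cycE k z (chi : H -> C) : is_character chi ->
  alpha t k z chi (1%:Z, 0) = z *: cycmx C k.
Proof.
move=> chiC; rewrite /alpha /= expr1z expr1.
have -> : \row_(i < k) chi (iter i t 0) = const_mx 1.
  by apply/matrixP=> i j; rewrite !mxE iter_raddf0 character0.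
by rewrite diag_const_mx mulmx1.
Qed.

End CyclicMatrix.

Section Irreducibility.
Variables (C : numClosedFieldType) (H : zmodType) (t : {additive H -> H}).

Lemma delta_mx_sub_diag_stable k (I : Type) (d : I -> 'rV[C]_k) (W : 'M[C]_k) :
  (forall x, W *m diag_mx (d x) <= W)%MS ->
  (forall p q, p != q -> exists x, d x 0 p != d x 0 q) ->
  forall (v : 'rV[C]_k) p, (v <= W)%MS -> v 0 p != 0 ->
  (delta_mx (0 : 'I_1) p <= W)%MS.
Proof.
move=> stW sep; pose supp (u : 'rV[C]_k) := [set j | u 0 j != 0].
suff ind n v p : (#|supp v| < n)%N -> (v <= W)%MS -> v 0 p != 0 ->
    (delta_mx (0 : 'I_1) p <= W)%MS.
  by move=> v p; apply: ind (ltnSn _).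
elim: n v p => // n IH v p suppv vW vp.
have [q /andP[qp vq] | vsingle] := pickP [pred q | (q != p) && (v 0 q != 0)].
  have [x dpq] := sep q p qp.
  pose v' := v *m diag_mx (d x) - d x 0 q *: v.
  have v'E j : v' 0 j = v 0 j * (d x 0 j - d x 0 q).
    by rewrite /v' mul_mx_diag !mxE mulrBr [d x 0 q * _]mulrC.
  apply: (IH v'); last by rewrite v'E mulf_neq0 // subr_eq0 eq_sym.
    rewrite -ltnS; apply: leq_trans suppv; apply: proper_card; apply/properP.
    split; first by apply/subsetP=> j; rewrite !inE v'E mulf_eq0 negb_or => /andP[].
    by exists q; rewrite !inE ?v'E ?subrr ?mulr0 ?eqxx.
  by rewrite addmx_sub ?eqmx_opp ?scalemx_sub // (submx_trans (submxMr _ vW) (stW x)).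
have -> : delta_mx 0 p = (v 0 p)^-1 *: v.
  apply/matrixP=> i j; rewrite !mxE (ord1 i) eqxx /=.
  have [->|jp] := eqVneq j p; first by rewrite mulVf.
  by move: (vsingle j); rewrite /= jp /= => /negbFE/eqP ->; rewrite mulr0.
exact: scalemx_sub.
Qed.

Lemma row_full_trcycmx_stable k (W : 'M[C]_k) (j : 'I_k) :
  (W *m (cycmx C k)^T <= W)%MS -> (delta_mx (0 : 'I_1) j <= W)%MS -> row_full W.
Proof.
move=> stW Wj; have Wall m : (delta_mx (0 : 'I_1) (iter m (@ordS k) j) <= W)%MS.
  elim: m => //= m IH; rewrite -delta_mx_mul_trcycmx.
  exact: submx_trans (submxMr _ IH) stW.
rewrite -sub1mx; apply/row_subP=> q; rewrite row1.
suff -> : q = iter (k - j + q) (@ordS k) j by [].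
by apply: val_inj; rewrite val_iter_ordS addnA subnKC 1?ltnW // modnDl modn_small.
Qed.

Lemma iter_separates (f : H -> C) k p q : bijective t ->
  (forall d, periodic t f d -> (k %| d)%N) -> (p < q)%N -> (q < k)%N ->
  exists h, f (iter p t h) != f (iter q t h).
Proof.
move=> [u tK uK] min pq qk; apply: NNPP => none.
have fpq h : f (iter p t h) = f (iter q t h).
  by apply/eqP/negPn/negP=> neq; apply: none; exists h.
have iter_u h : iter p t (iter p u h) = h.
  by elim: (p) => // n IH; rewrite iterSr iterS uK.
have : (k %| q - p)%N.
  apply: min => h.
  by rewrite -[in RHS](iter_u h) fpq -[in RHS](subnK (ltnW pq)) iterD iter_u.
move/dvdn_leq; rewrite subn_gt0 pq => /(_ isT); rewrite leqNgt.
by rewrite (leq_ltn_trans (leq_subr p q) qk).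
Qed.

Lemma irreducible_alpha k z (chi : H -> C) : bijective t -> (0 < k)%N -> z != 0 ->
  is_character chi -> (forall d, periodic t chi d -> (k %| d)%N) ->
  irreducible_rep (alpha t k z chi).
Proof.
move=> t_bij k_gt0 z_neq0 chiC min; split=> // W stW.
pose D h := \row_(i < k) chi (iter i t h).
have stD h : (W *m diag_mx (D h) <= W)%MS.
  by have := stW (0%:Z, h); rewrite alpha_diagE tr_diag_mx.
have stA : (W *m (cycmx C k)^T <= W)%MS.
  have := stW (1%:Z, 0); rewrite alpha_cycE // linearZ /= -scalemxAr.
  by rewrite (eqmx_scale _ z_neq0).
have sep (p q : 'I_k) : p != q -> exists h, D h 0 p != D h 0 q.
  rewrite -val_eqE neq_ltn => /orP[pq|qp].
    by have [h] := iter_separates t_bij min pq (ltn_ord q); exists h; rewrite !mxE.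
  by have [h] := iter_separates t_bij min qp (ltn_ord p); exists h; rewrite !mxE eq_sym.
have [->|W_neq0] := eqVneq W 0; [by left; apply/eqmx0P | right].
have /existsP[i /existsP[j Wij]] : [exists i, exists j, W i j != 0].
  apply: contraNT W_neq0 => /existsPn none; apply/eqP/matrixP=> i j; rewrite mxE.
  by apply/eqP; move/existsPn: (none i) => /(_ j) /negPn.
apply: (row_full_trcycmx_stable stA (j := j)).
by apply: (delta_mx_sub_diag_stable stD sep (row_sub i W)); rewrite mxE.
Qed.

End Irreducibility.

Section PeriodOfIrreducible.
Variables (C : numClosedFieldType) (H : zmodType) (t : {additive H -> H}).

Definition modn_eq_mx k g : 'M[C]_k := \matrix_(i, j) (i == j %[mod g])%:R.

Lemma tr_modn_eq_mx k g : (modn_eq_mx k g)^T = modn_eq_mx k g.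
Proof. by apply/matrixP=> i j; rewrite !mxE eq_sym. Qed.

Lemma comm_mx_tr k (A B : 'M[C]_k) : A^T = A -> comm_mx A B -> comm_mx A B^T.
Proof. by move=> AT AB; rewrite /comm_mx -{1}AT -trmx_mul -AB trmx_mul AT. Qed.

Lemma comm_mxX k (A B : 'M[C]_k) m : comm_mx A B -> comm_mx A (B ^+ m).
Proof.
by move=> AB; elim: m => [|m IH]; rewrite ?expr0 ?exprS; [exact: comm_mx1 | exact: comm_mxM].
Qed.

Lemma comm_modn_eq_cycmx k g : (0 < k)%N -> (g %| k)%N ->
  comm_mx (modn_eq_mx k g) (cycmx C k).
Proof.
move=> k_gt0 gk; rewrite /comm_mx; apply/matrixP=> i j; rewrite mulmx_cycmx cycmx_mulmx !mxE /=.
rewrite !(modn_dvdm _ gk) -(eqn_modDr 1 (i + k).-1) addn1 prednK ?addn_gt0 ?k_gt0 ?orbT //.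
by rewrite -modnDmr (eqP gk) addn0 addn1.
Qed.

Lemma comm_modn_eq_diag k g (f : H -> C) h : periodic t f g ->
  comm_mx (modn_eq_mx k g) (diag_mx (\row_(i < k) f (iter i t h))).
Proof.
move=> fg; rewrite /comm_mx; apply/matrixP=> i j; rewrite mul_mx_diag mul_diag_mx !mxE.
have [ij|_] := eqVneq (i %% g)%N (j %% g)%N; last by rewrite mulr0 mul0r.
by rewrite mulr1 mul1r (periodic_modn _ _ fg) -ij -periodic_modn.
Qed.

Lemma modn_eq_mx_neither_0_nor_full k g : (0 < g)%N -> (g < k)%N ->
  ~~ (modn_eq_mx k g == (0 : 'M[C]_k))%MS /\ ~~ row_full (modn_eq_mx k g).
Proof.
move=> g_gt0 gk; have k_gt0 := ltn_trans g_gt0 gk.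
pose o := Ordinal k_gt0; pose og := Ordinal gk; split.
  apply/negP=> /eqmx0P/matrixP/(_ o o); rewrite !mxE eqxx => /eqP.
  by rewrite oner_eq0.
pose v : 'cV[C]_k := delta_mx o 0 - delta_mx og 0.
have Wv : modn_eq_mx k g *m v = 0.
  by apply/matrixP=> i j; rewrite mulmxBr -!colE !mxE mod0n modnn subrr.
apply/negP; rewrite row_full_unit => Wunit; move/matrixP/(_ o 0): (mulKmx Wunit v).
rewrite Wv mulmx0 !mxE eqxx /= (_ : (o == og) = false) ?subr0 => [/eqP|].
  by rewrite eq_sym oner_eq0.
by apply/negbTE; rewrite -val_eqE /= eq_sym -lt0n.
Qed.

Lemma irreducible_alpha_period k z (chi : H -> C) g :
  is_character chi -> irreducible_rep (alpha t k z chi) -> periodic t chi g ->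
  (0 < g)%N -> (g %| k)%N -> g = k.
Proof.
move=> chiC [k_gt0 irr] chig g_gt0 gk; apply/eqP; rewrite eqn_leq dvdn_leq //=.
rewrite leqNgt; apply/negP=> gltk.
have [W_neq0 W_nfull] := modn_eq_mx_neither_0_nor_full g_gt0 gltk.
have cA := comm_modn_eq_cycmx k_gt0 gk.
have cAT := comm_mx_tr (tr_modn_eq_mx k g) cA.
have cW x : comm_mx (modn_eq_mx k g) (alpha t k z chi x).
  rewrite /comm_mx /alpha -scalemxAl -scalemxAr; congr (_ *: _).
  by apply: comm_mxM; [case: x.1 => n /=; apply: comm_mxX | apply: comm_modn_eq_diag].
have [W0|Wfull] := irr _ (fun x => comm_mx_stable (comm_mx_tr (tr_modn_eq_mx k g) (cW x))).
  by rewrite W0 in W_neq0.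
by rewrite Wfull in W_nfull.
Qed.

Lemma exact_period_of_irreducible k z (chi : H -> C) :
  is_character chi -> factors_through t k chi -> irreducible_rep (alpha t k z chi) ->
  exact_period t chi k.
Proof.
move=> chiC chik irr; have chik' := periodic_factors_through chiC chik.
have k_gt0 : (0 < k)%N by case: irr.
split=> // d chid; have <- : gcdn k d = k.
  apply: (irreducible_alpha_period chiC irr); first exact: periodic_gcdn.
    by rewrite gcdn_gt0 k_gt0.
  exact: dvdn_gcdl.
exact: dvdn_gcdr.
Qed.

End PeriodOfIrreducible.

Section CRTPermutation.
Variable C : numClosedFieldType.
Variables (k1 k2 : nat) (k1_gt0 : (0 < k1)%N) (k2_gt0 : (0 < k2)%N).
Hypothesis k12_coprime : coprime k1 k2.

Definition crt1 (j : 'I_(k1 * k2)) : 'I_k1 := Ordinal (ltn_pmod j k1_gt0).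
Definition crt2 (j : 'I_(k1 * k2)) : 'I_k2 := Ordinal (ltn_pmod j k2_gt0).
Definition crt_index (j : 'I_(k1 * k2)) := mxtens_index (crt1 j, crt2 j).

(* The permutation matrix of the Chinese remainder bijection [j |-> (j mod k1, j mod k2)],
   read in the row-major indexing of the Kronecker product. *)
Definition crt_perm_mx : 'M[C]_(k1 * k2) := \matrix_(j, p) (crt_index j == p)%:R.

Lemma crt_eq i j : ((crt1 i == crt1 j) && (crt2 i == crt2 j)) = (i == j).
Proof. by rewrite -!val_eqE /= -chinese_remainder // !modn_small. Qed.

Lemma crt_index_inj : injective crt_index.
Proof.
move=> i j /(can_inj (@mxtens_indexK _ _)) /eqP.
by rewrite xpair_eqE crt_eq => /eqP.
Qed.

Lemma crt_perm_mulmx m (X : 'M[C]_(k1 * k2, m)) i j :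
  (crt_perm_mx *m X) i j = X (crt_index i) j.
Proof.
rewrite mxE (bigD1 (crt_index i)) //= mxE eqxx mul1r big1 ?addr0 // => l l0.
by rewrite mxE eq_sym (negbTE l0) mul0r.
Qed.

Lemma mulmx_trcrt_perm m (X : 'M[C]_(m, k1 * k2)) i j :
  (X *m crt_perm_mx^T) i j = X i (crt_index j).
Proof.
rewrite mxE (bigD1 (crt_index j)) //= !mxE eqxx mulr1 big1 ?addr0 // => l l0.
by rewrite !mxE eq_sym (negbTE l0) mulr0.
Qed.

Lemma crt_perm_mx_unitary : crt_perm_mx *m crt_perm_mx^T = 1%:M.
Proof.
apply/matrixP=> i j; rewrite mulmx_trcrt_perm !mxE (inj_eq crt_index_inj).
by case: (i == j).
Qed.

Lemma adjmx_crt_perm : adjmx crt_perm_mx = crt_perm_mx^T.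
Proof. by apply/matrixP=> i j; rewrite !mxE rmorph_nat. Qed.

Local Notation crt_conj X Y := (crt_perm_mx *m (X *t Y) *m crt_perm_mx^T).

Lemma crt_conjE (X : 'M[C]_k1) (Y : 'M[C]_k2) i j :
  (crt_conj X Y) i j = X (crt1 i) (crt1 j) * Y (crt2 i) (crt2 j).
Proof. by rewrite mulmx_trcrt_perm crt_perm_mulmx tensmxE. Qed.

Lemma crt_conjM (X1 X2 : 'M[C]_k1) (Y1 Y2 : 'M[C]_k2) :
  crt_conj (X1 *m X2) (Y1 *m Y2) = crt_conj X1 Y1 *m crt_conj X2 Y2.
Proof.
by rewrite -tensmx_mul -!mulmxA (mulmxA crt_perm_mx^T) (mulmx1C crt_perm_mx_unitary) mul1mx.
Qed.

Lemma crt_conj1 : crt_conj (1%:M : 'M[C]_k1) (1%:M : 'M[C]_k2) = 1%:M.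
Proof. by apply/matrixP=> i j; rewrite crt_conjE !mxE -natrM mulnb crt_eq. Qed.

Lemma crt_conjX (X : 'M[C]_k1) (Y : 'M[C]_k2) m :
  crt_conj (X ^+ m) (Y ^+ m) = (crt_conj X Y) ^+ m.
Proof.
elim: m => [|m IH]; first by rewrite !expr0 crt_conj1.
by rewrite !exprS -!mulmxE crt_conjM IH.
Qed.

Lemma crt_conjT (X : 'M[C]_k1) (Y : 'M[C]_k2) : crt_conj X^T Y^T = (crt_conj X Y)^T.
Proof. by apply/matrixP=> i j; rewrite crt_conjE [RHS]mxE crt_conjE !mxE. Qed.

Lemma crt_conj_cycmx : crt_conj (cycmx C k1) (cycmx C k2) = cycmx C (k1 * k2).
Proof.
apply/matrixP=> i j; rewrite crt_conjE !mxE -natrM mulnb /=; congr (nat_of_bool _)%:R.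
rewrite -[in RHS](modn_small (ltn_ord i)) chinese_remainder //.
by rewrite -!(addn1 (_ %% _)) !modnDml !addn1.
Qed.

Lemma crt_conj_diag (d1 : 'rV[C]_k1) (d2 : 'rV[C]_k2) :
  crt_conj (diag_mx d1) (diag_mx d2) = diag_mx (\row_j (d1 0 (crt1 j) * d2 0 (crt2 j))).
Proof.
apply/matrixP=> i j; rewrite crt_conjE !mxE mulrnAl mulrnAr -mulrnA.
by rewrite mulnC mulnb crt_eq.
Qed.

End CRTPermutation.

Lemma irreducible_rep_conjugate (C : numClosedFieldType) (G : Type) n
    (rho sigma : G -> 'M[C]_n) :
  conjugate_reps rho sigma -> irreducible_rep sigma -> irreducible_rep rho.
Proof.
case=> U [Uunitary rhoU] [n_gt0 irr]; split=> // W stW.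
have UadjU : adjmx U *m U = 1%:M := mulmx1C Uunitary.
have UT_unit : U^T \in unitmx.
  by rewrite unitmx_tr; case: (mulmx1_unit Uunitary).
have stWU x : stablemx (W *m U^T) (sigma x)^T.
  rewrite -rhoU !trmx_mul !mulmxA -(mulmxA W) -trmx_mul UadjU trmx1 mulmx1.
  exact: submxMr (stW x).
have rkWU : \rank (W *m U^T) = \rank W by rewrite mxrankMfree // row_free_unit.
by have := irr _ stWU; rewrite /row_full !submx0 !sub0mx !andbT -!mxrank_eq0 rkWU.
Qed.

Lemma tens_scalemx (C : numClosedFieldType) m n p q (a b : C)
    (X : 'M[C]_(m, n)) (Y : 'M[C]_(p, q)) :
  (a *: X) *t (b *: Y) = (a * b) *: (X *t Y).
Proof. by apply/matrixP=> i j; rewrite !mxE mulrACA. Qed.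

Lemma conjugate_tens_alpha (C : numClosedFieldType) (H : zmodType) (t : {additive H -> H})
    k1 k2 (k1_gt0 : (0 < k1)%N) (k2_gt0 : (0 < k2)%N) (z1 z2 : C) (chi1 chi2 : H -> C) :
  coprime k1 k2 -> z1 != 0 -> z2 != 0 -> is_character chi1 -> is_character chi2 ->
  factors_through t k1 chi1 -> factors_through t k2 chi2 ->
  conjugate_reps (tens_rep (alpha t k1 z1 chi1) (alpha t k2 z2 chi2))
    (alpha t (k1 * k2) (z1 * z2) (fun h => chi1 h * chi2 h)).
Proof.
move=> k12_coprime z1_neq0 z2_neq0 chi1C chi2C chi1k chi2k.
have chi1k1 := periodic_factors_through chi1C chi1k.
have chi2k2 := periodic_factors_through chi2C chi2k.
exists (crt_perm_mx C k1_gt0 k2_gt0); rewrite /unitary_mx adjmx_crt_perm.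
split=> [|[n h]]; first exact: crt_perm_mx_unitary.
rewrite /tens_rep /alpha /= tens_scalemx -scalemxAr -scalemxAl exprzMl ?unitfE //.
rewrite crt_conjM ?crt_conj_diag //; congr (_ *: (_ *m diag_mx _)).
  by case: n => m /=; rewrite crt_conjX ?crt_conjT ?crt_conj_cycmx.
apply/matrixP=> a j; rewrite !mxE /=.
by rewrite -(periodic_modn _ _ chi1k1) -(periodic_modn _ _ chi2k2).
Qed.

Unset Implicit Arguments.

Theorem proposition4p7 (R : realType) (H : zmodType) (t : {additive H -> H})
  (t_bij : bijective t) (k1 k2 : nat) (hk1 : (0 < k1)%N) (hk2 : (0 < k2)%N)
  (hcop : coprime k1 k2) (z1 z2 : R[i]) (hz1 : in_S1 z1) (hz2 : in_S1 z2)
  (chi1 chi2 : H -> R[i])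
  (hchi1 : is_character chi1) (hchi1k : factors_through t k1 chi1)
  (hchi2 : is_character chi2) (hchi2k : factors_through t k2 chi2) :
  conjugate_reps
    (tens_rep (alpha t k1 z1 chi1) (alpha t k2 z2 chi2))
    (alpha t (k1 * k2) (z1 * z2) (fun h => chi1 h * chi2 h))
  /\ (irreducible_rep (alpha t k1 z1 chi1) -> irreducible_rep (alpha t k2 z2 chi2) ->
      irreducible_rep (tens_rep (alpha t k1 z1 chi1) (alpha t k2 z2 chi2))).
Proof.
have S1_neq0 (z : R[i]) : in_S1 z -> z != 0 by rewrite -normr_eq0 => ->; rewrite oner_eq0.
have conj := conjugate_tens_alpha hk1 hk2 hcop (S1_neq0 _ hz1) (S1_neq0 _ hz2)
  hchi1 hchi2 hchi1k hchi2k.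
split=> // irr1 irr2; apply: irreducible_rep_conjugate conj _.
have [_ min12] := exact_period_mul hk1 hcop hchi1 hchi2
  (exact_period_of_irreducible hchi1 hchi1k irr1) (exact_period_of_irreducible hchi2 hchi2k irr2).
apply: irreducible_alpha => //; last exact: character_mul.
  by rewrite muln_gt0 hk1.
by rewrite mulf_neq0 ?S1_neq0.
Qed.
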